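(* For every algorithm $A$ for List Update with Time Windows there exists an algorithm $B$ such that for every input sequence $\sigma$: (1) whenever $B$ performs an access serving requests at some time $t$, at least one of the requests it serves at time $t$ has deadline exactly $t$; and (2) $B(\sigma)\le A(\sigma)$.
   Context: List Update with Time Windows. A set $\mathbb{E}$ of $n$ elements is kept in an ordered list (position $1$ is the head). An input $\sigma$ is a sequence of requests $r_1,\dots,r_m$; request $r_k$ specifies an element $e_k\in\mathbb{E}$, an arrival time $a_k$ and a deadline $q_k\ge a_k$. At any time an algorithm may (a) perform an access up to position $i$, at cost $i$, which serves every pending request whose element currently lies in positions $1,\dots,i$; (b) swap two adjacent elements at cost $1$. Actions are instantaneous. An algorithm is valid if it serves every request at some time in $[a_k,q_k]$. The cost $A(\sigma)$ of an algorithm $A$ on $\sigma$ is total access cost plus number of swaps. *)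

From HB Require Import structures.
From mathcomp Require Import all_boot all_order all_algebra.
Set Implicit Arguments. Unset Strict Implicit. Unset Printing Implicit Defensive.
Import Order.TTheory GRing.Theory Num.Theory.
Local Open Scope ring_scope.

(* Actions (positions are 1-indexed, position 1 is the head):
   Access i : access up to position i (cost i);
   Swap j   : swap the elements at positions j and j+1 (cost 1). *)
Inductive action := Access of nat | Swap of nat.

Section LUTW.
Variables (T : finType) (R : realFieldType).

Definition request := (T * R * R)%type.
Definition req_elt (r : request) : T := r.1.1.
Definition req_arr (r : request) : R := r.1.2.
Definition req_dl  (r : request) : R := r.2.

(* An input: a finite sequence of requests with a_k <= q_k.
   Requests are identified by their index in the sequence. *)
Definition wf_input (sigma : seq request) : bool :=
  all (fun r => req_arr r <= req_dl r) sigma.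

(* A schedule (the behaviour of an algorithm on an input): a finite sequence
   of timed actions, performed in order; times are nondecreasing, several
   (instantaneous) actions may happen at the same time, in sequence order. *)
Definition schedule := seq (R * action).

Definition act_time (s : schedule) (k : nat) : R := (nth (0, Access 0) s k).1.
Definition act_of (s : schedule) (k : nat) : action := (nth (0, Access 0) s k).2.

Definition wf_action (n : nat) (a : action) : bool :=
  match a with
  | Access i => (0 < i <= n)%N
  | Swap j => (0 < j < n)%N
  end.

Definition wf_sched (n : nat) (s : schedule) : bool :=
  sorted (fun x y : R => x <= y) (map fst s) && all (wf_action n) (map snd s).

Definition swap_at (j : nat) (L : seq T) : seq T :=
  match drop j.-1 L with
  | x :: y :: rest => take j.-1 L ++ y :: x :: rest
  | _ => L
  end.

Definition apply_action (L : seq T) (a : action) : seq T :=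
  match a with
  | Access _ => L
  | Swap j => swap_at j L
  end.

(* list configuration just before the k-th action (0-indexed) *)
Definition config (L0 : seq T) (s : schedule) (k : nat) : seq T :=
  foldl apply_action L0 (map snd (take k s)).

Definition covers (L0 : seq T) (sigma : seq request) (s : schedule)
    (k r : nat) : bool :=
  (k < size s)%N &&
  match act_of s k, onth sigma r with
  | Access i, Some rq =>
      (req_arr rq <= act_time s k <= req_dl rq) &&
      (req_elt rq \in take i (config L0 s k))
  | _, _ => false
  end.

(* request r is served (newly, i.e. it was still pending) by the k-th action *)
Definition serves (L0 : seq T) (sigma : seq request) (s : schedule)
    (k r : nat) : bool :=
  covers L0 sigma s k r && ~~ has (fun k' => covers L0 sigma s k' r) (iota 0 k).

Definition valid (L0 : seq T) (sigma : seq request) (s : schedule) : Prop :=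
  forall r, (r < size sigma)%N -> exists k, covers L0 sigma s k r.

Definition deadline_serving (L0 : seq T) (sigma : seq request) (s : schedule)
    : Prop :=
  forall k r, serves L0 sigma s k r ->
    exists r', serves L0 sigma s k r' /\
      omap req_dl (onth sigma r') = Some (act_time s k).

Definition action_cost (a : action) : nat :=
  match a with Access i => i | Swap _ => 1%N end.

Definition cost (s : schedule) : nat := \sum_(a <- s) action_cost a.2.

End LUTW.

(* An (offline) algorithm maps each input to its schedule. *)
Definition algorithm (T : finType) (R : realFieldType) :=
  seq (request T R) -> schedule R.

From HB Require Import structures.
From mathcomp Require Import all_boot all_order all_algebra.
From mathcomp Require Import zify.
From Stdlib Require Import Classical IndefiniteDescription.
Set Implicit Arguments. Unset Strict Implicit. Unset Printing Implicit Defensive.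

(* B simulates A with the potential "number of pairs ordered differently in the
   lists of B and of A" (a Kendall tau distance). B ignores the swaps of A:
   when A accesses a prefix containing a not yet served request, B
   postpones the access to the earliest deadline tau of the newly served
   requests; accesses of A before tau are merged into the postponed one, whose
   target list puts the union of both prefixes in front, which does not
   increase the potential. At time tau, B bubble-sorts its list into the target
   list, paying at most the potential, and performs the access. Each swap of A
   raises the potential by at most one and each access of A pays for the depth
   it adds to the pending access, so B never costs more than A. *)

Lemma unsorted_adjacent (A : Type) (e : rel A) (P : seq A) : ~~ sorted e P ->
  exists l1 x y l2, P = l1 ++ x :: y :: l2 /\ ~~ e x y.
Proof.
elim: P => [|x [|y P] IH] //=; case: (boolP (e x y)) => [exy /IH|nxy _].
  by case=> [l1 [x' [y' [l2 [-> h]]]]]; exists (x :: l1), x', y', l2.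
by exists [::], x, y, P.
Qed.

Section Kendall.
Variable T : finType.
Implicit Types (P Q E C D : seq T) (x y u v : T).

Definition arrangement P := perm_eq P (enum T).

Lemma mem_arrangement P x : arrangement P -> x \in P.
Proof. by move=> hP; rewrite (perm_mem hP) mem_enum. Qed.

Lemma arrangement_uniq P : arrangement P -> uniq P.
Proof. by move=> hP; rewrite (perm_uniq hP) enum_uniq. Qed.

Lemma size_arrangement P : arrangement P -> size P = #|T|.
Proof. by move=> hP; rewrite (perm_size hP) cardE. Qed.

Lemma swap_at_cat l1 l2 x y :
  swap_at (size l1).+1 (l1 ++ x :: y :: l2) = l1 ++ y :: x :: l2.
Proof. by rewrite /swap_at /= drop_size_cat // take_size_cat. Qed.

Lemma swap_at_split Q j : 0 < j < size Q ->
  exists l1 x y l2, Q = l1 ++ x :: y :: l2 /\ j = (size l1).+1.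
Proof.
case/andP=> j0 jQ; exists (take j.-1 Q).
case E: (drop j.-1 Q) => [|x [|y l2]].
- by move/(congr1 size): E; rewrite size_drop /=; lia.
- by move/(congr1 size): E; rewrite size_drop /=; lia.
exists x, y, l2; rewrite -E cat_take_drop size_take; split=> //; case: ltnP; lia.
Qed.

Lemma perm_swap_at j P : perm_eq (swap_at j P) P.
Proof.
rewrite /swap_at; case E: (drop j.-1 P) => [|x [|y l2]] //.
by rewrite -{2}(cat_take_drop j.-1 P) E perm_cat2l (perm_catCA [:: y] [:: x]).
Qed.

Lemma arrangement_swap_at j P : arrangement P -> arrangement (swap_at j P).
Proof. exact: perm_trans (perm_swap_at j P). Qed.

Definition inversions P Q :=
  [set p : T * T | (index p.1 P < index p.2 P) && (index p.2 Q < index p.1 Q)].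

Definition kendall P Q := #|inversions P Q|.

Lemma kendallxx P : kendall P P = 0.
Proof.
apply/eqP; rewrite cards_eq0; apply/eqP/setP => -[u v].
by rewrite !inE /=; case: ltngtP.
Qed.

Lemma kendall_triangle P Q D : arrangement Q ->
  kendall P D <= kendall P Q + kendall Q D.
Proof.
move=> hQ; apply: leq_trans (leq_card_setU _ _).
apply: subset_leq_card; apply/subsetP => -[u v]; rewrite !inE /= => /andP[uv vu].
have /negPf nuv : index u Q != index v Q.
  apply: contraTneq uv => /(index_inj u (mem_arrangement _ hQ) (mem_arrangement _ hQ)) ->.
  by rewrite ltnn.
rewrite uv /=; case: (ltngtP (index u Q) (index v Q)) nuv => [h|h|//] _.
  by apply/orP; right; apply/andP.
by apply/orP; left.
Qed.

(* Only the relative order of [x] and [y] changes. *)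
Lemma ltn_index_swap l1 l2 x y u v : uniq (l1 ++ x :: y :: l2) ->
  (index u (l1 ++ y :: x :: l2) < index v (l1 ++ y :: x :: l2)) =
  ((u == y) && (v == x)) ||
  (~~ ((u == x) && (v == y)) && (index u (l1 ++ x :: y :: l2) < index v (l1 ++ x :: y :: l2))).
Proof.
rewrite cat_uniq /= => /and3P[_ /norP[xl1 /norP[yl1 _]] /andP[+ _]].
rewrite inE negb_or => /andP[xy _].
have idx a b z : index z (l1 ++ a :: b :: l2) =
   if z \in l1 then index z l1 else if z == a then size l1 else if z == b then (size l1).+1
   else (size l1 + 2 + index z l2)%N.
  by rewrite index_cat /= !(eq_sym z); case: ifP => // _; case: (a == z); case: (b == z) => /=; lia.
rewrite !idx.
case: (boolP (u \in l1)) => [ul1|_].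
  have /negPf ux : u != x by apply: contraNneq xl1 => <-.
  have /negPf uy : u != y by apply: contraNneq yl1 => <-.
  have := index_mem u l1; rewrite ul1 ux uy /= => ul.
  by case: ifP => //= _; case: (v == y); case: (v == x) => /=; lia.
case: (boolP (v \in l1)) => [vl1|_].
  have /negPf vx : v != x by apply: contraNneq xl1 => <-.
  have /negPf vy : v != y by apply: contraNneq yl1 => <-.
  have := index_mem v l1; rewrite vl1 vx vy !andbF /= => vl.
  by case: (u == y); case: (u == x) => /=; lia.
have : ~~ ((u == x) && (u == y)) by apply: contraNN xy => /andP[/eqP <- /eqP <-].
have : ~~ ((v == x) && (v == y)) by apply: contraNN xy => /andP[/eqP <- /eqP <-].
by case: (u == x); case: (u == y); case: (v == x); case: (v == y) => //=; lia.
Qed.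

Lemma kendall_swap_at Q j : arrangement Q -> 0 < j < size Q ->
  kendall Q (swap_at j Q) <= 1.
Proof.
move=> hQ /swap_at_split[l1 [x [y [l2 [EQ ->]]]]].
rewrite -(cards1 (x, y)) EQ swap_at_cat; apply: subset_leq_card.
apply/subsetP => -[u v]; rewrite !inE /= => /andP[uv].
have uQ : uniq (l1 ++ x :: y :: l2) by rewrite -EQ arrangement_uniq.
rewrite (ltn_index_swap _ _ uQ) ltnNge (ltnW uv) andbF orbF.
by case/andP=> /eqP -> /eqP ->.
Qed.

Lemma kendall_swap_atr P Q j : arrangement Q -> 0 < j < size Q ->
  kendall P (swap_at j Q) <= (kendall P Q).+1.
Proof.
move=> hQ hj; apply: leq_trans (kendall_triangle _ _ hQ) _.
by rewrite -addn1 leq_add2l kendall_swap_at.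
Qed.

Lemma kendall_swap_inversion l1 l2 x y Q : arrangement (l1 ++ x :: y :: l2) ->
  index y Q < index x Q -> kendall (l1 ++ y :: x :: l2) Q < kendall (l1 ++ x :: y :: l2) Q.
Proof.
move=> /arrangement_uniq uP yx; apply: proper_card; apply/properP; split.
  apply/subsetP => -[u v]; rewrite !inE /= (ltn_index_swap _ _ uP).
  case/andP=> /orP[/andP[/eqP -> /eqP ->]|/andP[_ ->] //].
  by rewrite ltnNge (ltnW yx).
have [x1 y1 xy] : [/\ x \notin l1, y \notin l1 & x != y].
  by move: uP; rewrite cat_uniq /= inE => /and3P[_ /norP[-> /norP[-> _]] /andP[/norP[]]].
exists (x, y); rewrite !inE /=; last by rewrite (ltn_index_swap _ _ uP) (negPf xy) !eqxx.
by rewrite yx andbT !index_cat (negPf x1) (negPf y1) /= eqxx (negPf xy) ltn_add2l.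
Qed.

Definition swap_seq P (w : seq nat) := foldl (fun L j => swap_at j L) P w.

Lemma sorted_index_arrangement Q : arrangement Q ->
  sorted (fun a b => index a Q <= index b Q) Q.
Proof.
case: Q => // x0 Q' hQ; apply/(sortedP x0) => i hi.
by rewrite !index_uniq ?(arrangement_uniq hQ) // ltnW.
Qed.

Lemma bubble_sort P Q : arrangement P -> arrangement Q -> exists w : seq nat,
  [/\ all (fun j => 0 < j < #|T|) w, swap_seq P w = Q & size w <= kendall P Q].
Proof.
move=> + hQ; have [k] := ubnP (kendall P Q); elim: k P => // k IH P hk hP.
case: (boolP (sorted (fun a b => index a Q <= index b Q) P)) => [sP|].
  exists [::]; split=> //=; apply: (sorted_eq (leT := fun a b => index a Q <= index b Q)) => //.
  - by move=> a b c; apply: leq_trans.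
  - move=> a b /andP[ab ba].
    apply: (index_inj a (mem_arrangement _ hQ) (mem_arrangement _ hQ)).
    by apply/eqP; rewrite /= eqn_leq ab.
  - exact: sorted_index_arrangement.
  - by apply: perm_trans hP _; rewrite perm_sym.
case/unsorted_adjacent=> l1 [x [y [l2 [EP]]]]; rewrite -ltnNge => yx.
have hP' : arrangement (l1 ++ y :: x :: l2) by rewrite -swap_at_cat -EP arrangement_swap_at.
have dec : kendall (l1 ++ y :: x :: l2) Q < kendall P Q by rewrite EP kendall_swap_inversion -?EP.
have [|w [wok wQ wsz]] := IH _ _ hP'; first exact: leq_trans dec _.
exists ((size l1).+1 :: w); split=> /=.
- by rewrite wok -(size_arrangement hP) EP size_cat /= andbT; lia.
- by rewrite /swap_seq /= EP swap_at_cat.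
- exact: leq_ltn_trans wsz dec.
Qed.

Definition front (U : pred T) E := filter U E ++ filter (predC U) E.

Lemma arrangement_front U E : arrangement E -> arrangement (front U E).
Proof. by rewrite /arrangement /front perm_filterC. Qed.

Lemma mem_take_front U E x :
  (x \in take (count U E) (front U E)) = (x \in E) && U x.
Proof. by rewrite take_size_cat ?size_filter // mem_filter andbC. Qed.

Lemma ltn_index_filter (U : pred T) E u v : u \in E -> v \in E -> U u -> U v ->
  (index u (filter U E) < index v (filter U E)) = (index u E < index v E).
Proof.
elim: E => //= x E IH; rewrite !in_cons => hu hv Uu Uv.
case: (eqVneq x u) => [?|xu]; case: (eqVneq x v) => [?|xv]; subst.
- by rewrite ltnn.
- by rewrite Uu /= eqxx (negPf xv).
- by rewrite Uv /= eqxx (negPf xu).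
move: hu hv; rewrite ![_ == x]eq_sym (negPf xu) (negPf xv) => hu hv.
by case: ifP => _ /=; rewrite ?(negPf xu) ?(negPf xv) ?ltnS IH.
Qed.

Lemma ltn_index_front U E u v : u \in E -> v \in E ->
  (index u (front U E) < index v (front U E)) =
  if U u == U v then index u E < index v E else U u.
Proof.
move=> uE vE; rewrite /front !index_cat !mem_filter uE vE !andbT /=.
have mu : U u -> index u (filter U E) < size (filter U E).
  by move=> Uu; rewrite index_mem mem_filter Uu.
have mv : U v -> index v (filter U E) < size (filter U E).
  by move=> Uv; rewrite index_mem mem_filter Uv.
case: (boolP (U u)) => Uu; case: (boolP (U v)) => Uv /=.
- exact: ltn_index_filter.
- by move: (mu Uu); lia.
- by apply/negbTE; rewrite -leqNgt; move: (mv Uv); lia.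
- by rewrite ltn_add2l ltn_index_filter.
Qed.

(* The two inversion sets are always disjoint; the separation hypothesis makes
   their union an inversion set of [E] and [C]. *)
Lemma kendall_front (U : pred T) E C : arrangement E -> arrangement C ->
  (forall x y, U x -> ~~ U y -> (index x E < index y E) || (index x C < index y C)) ->
  kendall E (front U E) + kendall (front U E) C <= kendall E C.
Proof.
move=> hE hC sep; rewrite /kendall -cardsUI.
have -> : inversions E (front U E) :&: inversions (front U E) C = set0.
  apply/setP => -[u v]; rewrite !inE /=; apply/negP.
  by case/andP=> /andP[_ /ltnW vu] /andP[]; rewrite ltnNge vu.
rewrite cards0 addn0; apply: subset_leq_card; apply/subsetP => -[u v].
have uE := mem_arrangement u hE; have vE := mem_arrangement v hE.
rewrite !inE /= !ltn_index_front //.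
case: (boolP (U u)) => Uu; case: (boolP (U v)) => Uv /=.
- lia.
- by have := sep _ _ Uu Uv; lia.
- by have := sep _ _ Uv Uu; lia.
- lia.
Qed.

Definition prefix_union E C s j : pred T :=
  [pred x | (x \in take s E) || (x \in take j C)].

Lemma prefix_union_sep E C s j x y : arrangement E -> arrangement C ->
  prefix_union E C s j x -> ~~ prefix_union E C s j y ->
  (index x E < index y E) || (index x C < index y C).
Proof.
by move=> hE hC; rewrite /prefix_union !inE !in_take ?mem_arrangement //; lia.
Qed.

Lemma count_prefix_union E C s j : uniq E -> s <= size E ->
  s <= count (prefix_union E C s j) E <= s + j.
Proof.
move=> uE sE; rewrite -size_filter; apply/andP; split.
  rewrite -{1}(size_takel sE); apply: uniq_leq_size; first exact: take_uniq.
  by move=> x xs; rewrite mem_filter /prefix_union inE xs (mem_take xs).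
apply: leq_trans (_ : size (take s E ++ take j C) <= _).
  apply: uniq_leq_size; first exact: filter_uniq.
  by move=> x; rewrite mem_filter mem_cat => /andP[].
by rewrite size_cat !size_take_min leq_add ?geq_minl.
Qed.

End Kendall.

Import Order.TTheory GRing.Theory Num.Theory.

Section Schedules.
Variables (T : finType) (R : realFieldType) (sigma : seq (request T R)).
Local Open Scope ring_scope.
Implicit Types (C F E : seq T) (s : schedule R).

Definition access_covers C i (t : R) r :=
  if onth sigma r is Some rq then
    (req_arr rq <= t <= req_dl rq) && (req_elt rq \in take i C)
  else false.

Lemma covers_head C t a s r :
  covers C sigma ((t, a) :: s) 0 r = if a is Access i then access_covers C i t r else false.
Proof.
by case: a => [i|j]; rewrite /covers /act_of /act_time /config //= /access_covers;
  case: (onth sigma r).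
Qed.

Lemma covers_behead C x s k r :
  covers C sigma (x :: s) k.+1 r = covers (@apply_action T C x.2) sigma s k r.
Proof. by []. Qed.

Lemma covers_catl C s1 s2 k r : (k < size s1)%N ->
  covers C sigma (s1 ++ s2) k r = covers C sigma s1 k r.
Proof.
elim: s1 C k => // -[t a] s1 IH C [|k] /= hk; first by rewrite !covers_head.
by rewrite !covers_behead IH.
Qed.

Lemma covers_catr C s1 s2 k r :
  covers C sigma (s1 ++ s2) (size s1 + k) r =
  covers (foldl (@apply_action T) C (map snd s1)) sigma s2 k r.
Proof. by elim: s1 C => //= x s1 IH C; rewrite addSn covers_behead IH. Qed.

Lemma serves_catl C s1 s2 k r : (k < size s1)%N ->
  serves C sigma (s1 ++ s2) k r = serves C sigma s1 k r.
Proof.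
move=> hk; rewrite /serves covers_catl //; congr (_ && ~~ _).
apply: eq_in_has => k'; rewrite mem_iota add0n => /andP[_ hk'].
by rewrite covers_catl // (ltn_trans hk').
Qed.

Lemma serves_catr C s1 s2 k r :
  serves C sigma (s1 ++ s2) (size s1 + k) r =
  serves (foldl (@apply_action T) C (map snd s1)) sigma s2 k r &&
  ~~ has (fun k' => covers C sigma s1 k' r) (iota 0 (size s1)).
Proof.
rewrite /serves covers_catr iotaD has_cat add0n negb_or.
have -> : iota (size s1) k = map (addn (size s1)) (iota 0 k) by rewrite -iotaDl addn0.
rewrite has_map.
have -> : has (fun k' => covers C sigma (s1 ++ s2) k' r) (iota 0 (size s1)) =
          has (fun k' => covers C sigma s1 k' r) (iota 0 (size s1)).
  by apply: eq_in_has => k'; rewrite mem_iota add0n => /andP[_ /covers_catl ->].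
rewrite (eq_has (a1 := preim (addn (size s1)) (fun k' => covers C sigma (s1 ++ s2) k' r))
                (a2 := fun k' => covers (foldl (@apply_action T) C (map snd s1)) sigma s2 k' r));
  last by move=> k'; exact: covers_catr.
by rewrite -andbA [X in _ && X]andbC.
Qed.

Lemma act_time_catl s1 s2 k : (k < size s1)%N ->
  act_time (s1 ++ s2) k = act_time s1 k.
Proof. by move=> hk; rewrite /act_time nth_cat hk. Qed.

Lemma act_time_catr s1 s2 k : act_time (s1 ++ s2) (size s1 + k) = act_time s2 k.
Proof. by rewrite /act_time nth_cat ltnNge leq_addr /= addKn. Qed.

Lemma cost_cat s1 s2 : cost (s1 ++ s2) = (cost s1 + cost s2)%N.
Proof. by rewrite /cost big_cat. Qed.

Lemma cost_cons x s : cost (x :: s) = (action_cost x.2 + cost s)%N.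
Proof. by rewrite /cost big_cons. Qed.

Record batch := Batch { batch_time : R; batch_swaps : seq nat; batch_depth : nat }.

Definition batch_sched b : schedule R :=
  [seq (batch_time b, Swap j) | j <- batch_swaps b] ++
  [:: (batch_time b, Access (batch_depth b))].

Lemma size_batch_sched b : size (batch_sched b) = (size (batch_swaps b)).+1.
Proof. by rewrite size_cat size_map addn1. Qed.

Lemma times_batch_sched b :
  map fst (batch_sched b) = nseq (size (batch_swaps b)).+1 (batch_time b).
Proof. by rewrite /batch_sched; elim: (batch_swaps b) => //= j w ->. Qed.

Lemma cost_batch_sched b :
  cost (batch_sched b) = (size (batch_swaps b) + batch_depth b)%N.
Proof.
rewrite cost_cat /cost big_map big_cons big_nil addn0 /=.
by rewrite (eq_bigr (fun=> 1%N)) // sum1_size.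
Qed.

Lemma foldl_swaps C (t : R) w :
  foldl (@apply_action T) C (map snd [seq (t, Swap j) | j <- w]) = swap_seq C w.
Proof. by elim: w C => //= j w IH C; rewrite IH. Qed.

Lemma foldl_batch_sched C b :
  foldl (@apply_action T) C (map snd (batch_sched b)) = swap_seq C (batch_swaps b).
Proof. by rewrite map_cat foldl_cat foldl_swaps. Qed.

Lemma covers_batch_swap C b k r : (k < size (batch_swaps b))%N ->
  covers C sigma (batch_sched b) k r = false.
Proof.
rewrite /batch_sched; elim: (batch_swaps b) C k => // j w IH C [|k] hk /=.
  by rewrite covers_head.
by rewrite covers_behead IH.
Qed.

Lemma covers_batch_access C b r :
  covers C sigma (batch_sched b) (size (batch_swaps b)) r =
  access_covers (swap_seq C (batch_swaps b)) (batch_depth b) (batch_time b) r.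
Proof.
have := covers_catr C [seq (batch_time b, Swap j) | j <- batch_swaps b]
                      [:: (batch_time b, Access (batch_depth b))] 0 r.
by rewrite addn0 size_map foldl_swaps covers_head.
Qed.

Lemma has_covers_batch C b r :
  has (fun k => covers C sigma (batch_sched b) k r) (iota 0 (size (batch_sched b))) =
  access_covers (swap_seq C (batch_swaps b)) (batch_depth b) (batch_time b) r.
Proof.
rewrite size_batch_sched -addn1 iotaD has_cat /= orbF add0n covers_batch_access.
case: access_covers; rewrite ?orbT // orbF; apply/hasPn => k.
by rewrite mem_iota add0n => /andP[_ /covers_batch_swap ->].
Qed.

Lemma act_time_batch b k : (k < size (batch_sched b))%N ->
  act_time (batch_sched b) k = batch_time b.
Proof.
move=> hk; rewrite /act_time -(nth_map _ 0) // times_batch_sched nth_nseq.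
by rewrite -size_batch_sched hk.
Qed.

Definition plan_sched (p : seq batch) : schedule R := flatten (map batch_sched p).

Lemma plan_sched_cons b p : plan_sched (b :: p) = batch_sched b ++ plan_sched p.
Proof. by []. Qed.

Definition deadline r : R := if onth sigma r is Some rq then req_dl rq else 0.

Lemma access_covers_deadline C i t r : access_covers C i t r ->
  omap (@req_dl T R) (onth sigma r) = Some (deadline r).
Proof. by rewrite /access_covers /deadline; case: onth. Qed.

Fixpoint plan_ok F (Cov : nat -> bool) (lo : R) (p : seq batch) : Prop :=
  if p is b :: p' then
    let E := swap_seq F (batch_swaps b) in
    let served := access_covers E (batch_depth b) (batch_time b) in
    [/\ all (fun j => 0 < j < #|T|)%N (batch_swaps b), (0 < batch_depth b <= #|T|)%N,
        lo <= batch_time b,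
        exists r, [/\ served r, ~~ Cov r & deadline r = batch_time b]
      & plan_ok E (fun r => Cov r || served r) (batch_time b) p']
  else forall r, (r < size sigma)%N -> Cov r.

Lemma plan_sched_wf F Cov lo p : plan_ok F Cov lo p ->
  path <=%R lo (map fst (plan_sched p)) && all (wf_action #|T|) (map snd (plan_sched p)).
Proof.
elim: p F Cov lo => // -[t w m] p IH F Cov lo [/= hw hm ht _ /IH /andP[sp wp]].
rewrite plan_sched_cons !(map_cat _ (batch_sched _)) cat_path all_cat wp andbT.
rewrite times_batch_sched /=.
have -> : last t (nseq (size w) t) = t by elim: (size w).
rewrite sp andbT /= ht; apply/andP; split; first by elim: (size w) => //= k ->; rewrite lexx.
by rewrite /batch_sched map_cat all_cat /= hm andbT; elim: w hw => //= j w IHw /andP[-> /IHw].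
Qed.

Lemma plan_sched_valid F Cov lo p : plan_ok F Cov lo p ->
  forall r, (r < size sigma)%N -> Cov r \/ exists k, covers F sigma (plan_sched p) k r.
Proof.
elim: p F Cov lo => [|b p IH] F Cov lo /=; first by move=> h r /h; left.
case=> _ _ _ _ /IH h r /h [/orP[|served]|[k hk]]; first by left.
  right; exists (size (batch_swaps b)).
  by rewrite covers_catl ?size_batch_sched // covers_batch_access.
by right; exists (size (batch_sched b) + k)%N; rewrite covers_catr foldl_batch_sched.
Qed.

Lemma plan_sched_deadline F Cov lo p : plan_ok F Cov lo p ->
  forall k r, serves F sigma (plan_sched p) k r -> ~~ Cov r ->
  exists r', [/\ serves F sigma (plan_sched p) k r', ~~ Cov r'
               & omap (@req_dl T R) (onth sigma r') = Some (act_time (plan_sched p) k)].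
Proof.
elim: p F Cov lo => [|b p IH] F Cov lo /=; first by move=> _ k r; rewrite /serves /covers.
case=> _ _ _ [r0 [c0 n0 d0]] /IH IHp k r; rewrite plan_sched_cons.
have [kb|] := ltnP k (size (batch_sched b)).
  rewrite serves_catl // act_time_catl // act_time_batch // => sr _.
  have [kw|] := ltnP k (size (batch_swaps b)).
    by move: sr; rewrite /serves covers_batch_swap.
  move: kb; rewrite size_batch_sched ltnS => kw wk; have -> : k = size (batch_swaps b) by lia.
  exists r0; split; rewrite ?(access_covers_deadline c0) ?d0 // serves_catl ?size_batch_sched // /serves.
  rewrite covers_batch_access c0; apply/hasPn => k'.
  by rewrite mem_iota add0n => /andP[_ /covers_batch_swap ->].
move=> /subnKC <-; rewrite serves_catr has_covers_batch foldl_batch_sched.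
case/andP=> sr nb nc; have [|r' [sr' /norP[nc' nb'] d']] := IHp _ _ sr; first by rewrite negb_or nc.
by exists r'; rewrite serves_catr has_covers_batch foldl_batch_sched sr' nb' act_time_catr.
Qed.

End Schedules.

Section Simulation.
Variables (T : finType) (R : realFieldType) (sigma : seq (request T R)).
Local Open Scope ring_scope.
Local Notation N := (size sigma).
Local Notation n := #|T|.
Local Notation deadline := (deadline sigma).
Implicit Types (C D E F : seq T) (rest : schedule R) (Cov : nat -> bool).

Lemma onth_size r rq : onth sigma r = Some rq -> (r < N)%N.
Proof. by elim: sigma r => [|x l IH] [|r] //= /IH. Qed.

Lemma access_coversP C i t r : access_covers sigma C i t r -> exists rq,
  [/\ onth sigma r = Some rq, req_arr rq <= t, t <= req_dl rq & req_elt rq \in take i C].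
Proof.
by rewrite /access_covers; case: onth => // rq /andP[/andP[? ?] ?]; exists rq.
Qed.

Lemma min_deadline (P : pred nat) r0 : (forall r, P r -> (r < N)%N) -> P r0 ->
  exists r1, P r1 /\ forall r, P r -> deadline r1 <= deadline r.
Proof.
move=> PN Pr0.
case: (@arg_minP _ _ _ (Ordinal (PN _ Pr0)) (fun i : 'I_N => P i) (fun i => deadline i) Pr0).
move=> i Pi imin.
by exists i; split=> // r Pr; apply: (imin (Ordinal (PN _ Pr))).
Qed.

Definition pending_covers E s (tm tau : R) r :=
  if onth sigma r is Some rq then
    [&& req_elt rq \in take s E, req_arr rq <= tm & tau <= req_dl rq]
  else false.

Lemma pending_coversP E s tm tau r : pending_covers E s tm tau r -> exists rq,
  [/\ onth sigma r = Some rq, req_elt rq \in take s E, req_arr rq <= tm & tau <= req_dl rq].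
Proof. by rewrite /pending_covers; case: onth => // rq /and3P[? ? ?]; exists rq. Qed.

Lemma pending_coversW E E' s s' tm tm' tau tau' r :
  {subset take s E <= take s' E'} -> tm <= tm' -> tau' <= tau ->
  pending_covers E s tm tau r -> pending_covers E' s' tm' tau' r.
Proof.
move=> sub tmle taule /pending_coversP[rq [o e a d]].
by rewrite /pending_covers o sub // (le_trans a tmle) (le_trans taule d).
Qed.

Lemma pending_access_covers E s tm tau r : tm <= tau ->
  pending_covers E s tm tau r -> access_covers sigma E s tau r.
Proof.
move=> le /pending_coversP[rq [o e a d]].
by rewrite /access_covers o e d (le_trans a le).
Qed.

Lemma access_pending_covers C i t tau r : tau <= deadline r ->
  access_covers sigma C i t r -> pending_covers C i t tau r.
Proof.
by move=> + /access_coversP[rq [o a _ e]]; rewrite /deadline /pending_covers o e a.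
Qed.

Lemma wf_sched_cons x rest : wf_sched n (x :: rest) ->
  [/\ wf_sched n rest, all (fun y => x.1 <= y.1) rest & wf_action n x.2].
Proof.
rewrite /wf_sched /= => /andP[sx /andP[wx wr]]; rewrite (path_sorted sx) wr wx.
by split=> //; rewrite -(all_map fst (fun y => x.1 <= y)) (order_path_min le_trans sx).
Qed.

(* [F] is B's list after the batches built so far, [Cov] the requests they
   serve and [lo] the time of the last one; [C] is A's list before [rest]. *)
Definition idle_sim rest : Prop :=
  forall F C Cov (lo : R),
  arrangement F -> arrangement C -> wf_sched n rest -> all (fun x => lo <= x.1) rest ->
  (forall r, (r < N)%N -> Cov r \/ exists k, covers C sigma rest k r) ->
  exists p, plan_ok sigma F Cov lo p /\
            (cost (plan_sched p) <= cost rest + kendall F C)%N.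

(* [E] and [s] are the list and depth that the delayed access will use, [tm] is
   the time of the latest access of the simulated algorithm it absorbs and
   [tau] the time at which it will be performed. *)
Definition pending_sim rest : Prop :=
  forall F C Cov (lo : R) E s tm tau,
  arrangement F -> arrangement C -> arrangement E -> (0 < s <= n)%N ->
  wf_sched n rest -> all (fun x => tm <= x.1) rest -> lo <= tm -> tm <= tau ->
  (exists r, [/\ pending_covers E s tm tau r, ~~ Cov r & deadline r = tau]) ->
  (forall r, (r < N)%N ->
     [\/ Cov r, pending_covers E s tm tau r | exists k, covers C sigma rest k r]) ->
  exists p, plan_ok sigma F Cov lo p /\
            (cost (plan_sched p) <= cost rest + kendall F E + s + kendall E C)%N.

Lemma idle_sim_nil : idle_sim [::].
Proof.
move=> F C Cov lo _ _ _ _ hv; exists [::]; split; last by rewrite /cost big_nil.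
by move=> r /hv [//|[k]].
Qed.

Lemma pending_close rest F C Cov lo E s tm tau : idle_sim rest ->
  arrangement F -> arrangement C -> arrangement E -> (0 < s <= n)%N ->
  wf_sched n rest -> all (fun x => tau <= x.1) rest -> lo <= tm -> tm <= tau ->
  (exists r, [/\ pending_covers E s tm tau r, ~~ Cov r & deadline r = tau]) ->
  (forall r, (r < N)%N ->
     [\/ Cov r, pending_covers E s tm tau r | exists k, covers C sigma rest k r]) ->
  exists p, plan_ok sigma F Cov lo p /\
            (cost (plan_sched p) <= cost rest + kendall F E + s + kendall E C)%N.
Proof.
move=> sim hF hC hE hs wr hrest lotm tmtau [r0 [p0 n0 d0]] hv.
have [w [wok wE wsz]] := bubble_sort hF hE.
have [|p [hp cp]] := sim E C (fun r => Cov r || access_covers sigma E s tau r) tau hE hC wr hrest.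
  move=> r /hv [c|/(pending_access_covers tmtau) c|c]; by [left; rewrite c ?orbT|right].
exists (Batch tau w s :: p); split.
  rewrite /= wE; split=> //; first exact: le_trans lotm tmtau.
  by exists r0; rewrite (pending_access_covers tmtau p0) n0 d0.
by rewrite plan_sched_cons cost_cat cost_batch_sched /=; lia.
Qed.

Lemma pending_sim_nil : pending_sim [::].
Proof.
move=> F C Cov lo E s tm tau hF hC hE hs wr _ lotm tmtau hr hv.
exact: (pending_close idle_sim_nil hF hC hE hs wr _ lotm tmtau hr hv).
Qed.

Lemma idle_sim_swap t j rest : idle_sim rest -> idle_sim ((t, Swap j) :: rest).
Proof.
move=> sim F C Cov lo hF hC /wf_sched_cons[wr _ wj] /andP[_ hlo] hv.
have hj : (0 < j < size C)%N by rewrite (size_arrangement hC).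
have [|p [hp cp]] := sim F (swap_at j C) Cov lo hF (arrangement_swap_at j hC) wr hlo.
  by move=> r /hv [c|[[|k] hk]]; [left | rewrite covers_head in hk | right; exists k].
exists p; split=> //; rewrite cost_cons /=.
by have := kendall_swap_atr F hC hj; lia.
Qed.

Lemma pending_sim_swap t j rest : pending_sim rest -> pending_sim ((t, Swap j) :: rest).
Proof.
move=> sim F C Cov lo E s tm tau hF hC hE hs /wf_sched_cons[wr _ wj] /andP[_ htm].
move=> lotm tmtau hr hv; have hj : (0 < j < size C)%N by rewrite (size_arrangement hC).
have [|p [hp cp]] :=
  sim F (swap_at j C) Cov lo E s tm tau hF (arrangement_swap_at j hC) hE hs wr htm lotm tmtau hr.
  move=> r /hv [c|c|[[|k] hk]]; [exact: Or31|exact: Or32| |by apply: Or33; exists k].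
  by rewrite covers_head in hk.
exists p; split=> //; rewrite cost_cons /=.
by have := kendall_swap_atr E hC hj; lia.
Qed.

Lemma access_covers_size C i t r : access_covers sigma C i t r -> (r < N)%N.
Proof. by case/access_coversP=> rq [/onth_size]. Qed.

Lemma earliest_fresh Cov C i t r0 : ~~ Cov r0 -> access_covers sigma C i t r0 ->
  exists r1, [/\ ~~ Cov r1, access_covers sigma C i t r1, t <= deadline r1
    & forall r, ~~ Cov r -> access_covers sigma C i t r -> deadline r1 <= deadline r].
Proof.
move=> n0 c0; have [|r1 [/andP[n1 c1] m1]] :=
  min_deadline (P := fun r => ~~ Cov r && access_covers sigma C i t r) _ (introT andP (conj n0 c0)).
  by move=> r /andP[_ /access_covers_size].
exists r1; split=> // [|r nr cr]; last by apply: m1; rewrite nr cr.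
by case/access_coversP: c1 => rq [o _ d _]; rewrite /deadline o.
Qed.

Lemma idle_sim_access t i rest :
  idle_sim rest -> pending_sim rest -> idle_sim ((t, Access i) :: rest).
Proof.
move=> isim psim F C Cov lo hF hC /wf_sched_cons[wr wt wi] /andP[lot hlo] hv.
case: (classic (exists r, ~~ Cov r && access_covers sigma C i t r)) => [[r0 /andP[n0 c0]]|none].
  have [r1 [n1 c1 tle m1]] := earliest_fresh n0 c0.
  have [||p [hp cp]] := psim F C Cov lo C i t (deadline r1) hF hC hC wi wr wt lot tle.
  - by exists r1; rewrite n1 (access_pending_covers (lexx _) c1).
  - move=> r /hv [c|[[|k] hk]]; [exact: Or31| |by apply: Or33; exists k].
    rewrite covers_head in hk; case: (boolP (Cov r)) => c; first exact: Or31.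
    exact/Or32/(access_pending_covers (m1 _ c hk) hk).
  by exists p; split=> //; move: cp; rewrite cost_cons kendallxx /=; clear; lia.
have [|p [hp cp]] := isim F C Cov lo hF hC wr hlo.
  move=> r /hv [c|[[|k] hk]]; [by left| |by right; exists k].
  rewrite covers_head in hk; case: (boolP (Cov r)) => c; first by left.
  by case: none; exists r; rewrite c hk.
by exists p; split=> //; rewrite cost_cons /=; lia.
Qed.

Lemma merged_deadline Cov E s tm tau C i t D s' :
  {subset take s E <= take s' D} -> {subset take i C <= take s' D} ->
  tm <= t -> t <= tau ->
  (exists r, [/\ pending_covers E s tm tau r, ~~ Cov r & deadline r = tau]) ->
  exists tau', [/\ t <= tau', tau' <= tau,
    exists r, [/\ pending_covers D s' t tau' r, ~~ Cov r & deadline r = tau']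
  & forall r, ~~ Cov r -> access_covers sigma C i t r -> tau' <= deadline r].
Proof.
move=> subE subC tmt ttau [r0 [p0 n0 d0]].
have old : pending_covers D s' t tau r0 := pending_coversW subE tmt (lexx _) p0.
case: (classic (exists r, ~~ Cov r && access_covers sigma C i t r)) => [[r2 /andP[n2 c2]]|none].
  have [r1 [n1 c1 tle m1]] := earliest_fresh n2 c2.
  case: (ltP (deadline r1) tau) => [lt|ge].
    exists (deadline r1); split=> //; first exact: ltW.
    exists r1; split=> //.
    exact: pending_coversW subC (lexx _) (lexx _) (access_pending_covers (lexx _) c1).
  exists tau; split=> //; first by exists r0.
  by move=> r c a; apply: le_trans ge (m1 _ c a).
exists tau; split=> //; first by exists r0.
by move=> r c a; case: none; exists r; rewrite c a.
Qed.

Lemma pending_sim_access t i rest :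
  idle_sim ((t, Access i) :: rest) -> pending_sim rest -> pending_sim ((t, Access i) :: rest).
Proof.
move=> isim psim F C Cov lo E s tm tau hF hC hE hs wr' htm lotm tmtau hr hv.
have [wr wt wi] := wf_sched_cons wr'.
case: (ltP tau t) => [taut|ttau].
  apply: (pending_close isim hF hC hE hs wr' _ lotm tmtau hr hv).
  by rewrite /= (ltW taut); apply: sub_all wt => y; apply: le_trans (ltW taut).
have tmt : tm <= t by case/andP: htm.
set U := prefix_union E C s i; set D := front U E; set s' := count U E.
have hD : arrangement D := arrangement_front U hE.
have hsE : (s <= size E)%N by rewrite (size_arrangement hE); case/andP: hs.
have /andP[ss' s'si] : (s <= s' <= s + i)%N := count_prefix_union C i (arrangement_uniq hE) hsE.
have hs' : (0 < s' <= n)%N.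
  by rewrite -(size_arrangement hE) count_size (leq_trans _ ss') //; case/andP: hs.
have subE : {subset take s E <= take s' D}.
  by move=> x xs; rewrite mem_take_front (mem_take xs) /U /prefix_union inE xs.
have subC : {subset take i C <= take s' D}.
  by move=> x xs; rewrite mem_take_front mem_arrangement // /U /prefix_union inE xs orbT.
have [tau' [ttau' tau'tau wit minr]] := merged_deadline subE subC tmt ttau hr.
have [|p [hp cp]] := psim F C Cov lo D s' t tau' hF hC hD hs' wr wt (le_trans lotm tmt) ttau' wit.
  move=> r /hv [c|c|[[|k] hk]]; [exact: Or31| |  |by apply: Or33; exists k].
    exact/Or32/(pending_coversW subE tmt tau'tau c).
  rewrite covers_head in hk; case: (boolP (Cov r)) => c; first exact: Or31.
  apply/Or32/(pending_coversW subC (lexx _) (lexx _)).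
  exact: access_pending_covers (minr _ c hk) hk.
exists p; split=> //; rewrite cost_cons /=.
have tri := kendall_triangle F D hE.
have merge : (kendall E D + kendall D C <= kendall E C)%N :=
  kendall_front hE hC (fun x y => @prefix_union_sep _ E C s i x y hE hC).
by clear -cp tri merge s'si; lia.
Qed.

Lemma simulation rest : idle_sim rest /\ pending_sim rest.
Proof.
elim: rest => [|[t [i|j]] rest [isim psim]].
- by split; [exact: idle_sim_nil | exact: pending_sim_nil].
- have isim' := idle_sim_access isim psim.
  by split=> //; exact: pending_sim_access.
- by split; [exact: idle_sim_swap | exact: pending_sim_swap].
Qed.

End Simulation.

Lemma deadline_schedule_exists (T : finType) (R : realFieldType) (L0 : seq T)
    (sigma : seq (request T R)) (sA : schedule R) :
  arrangement L0 -> wf_sched #|T| sA ->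
  exists sB, wf_sched #|T| sB /\
    [/\ valid L0 sigma sA -> valid L0 sigma sB, deadline_serving L0 sigma sB
      & (cost sB <= cost sA)%N].
Proof.
move=> hL0 wA; case: (classic (valid L0 sigma sA)) => [vA|nvA]; last first.
  exists [::]; split=> //; split=> [/nvA //|k r|]; first by rewrite /serves /covers.
  by rewrite /cost big_nil.
have lo_sA : all (fun x => head 0 (map fst sA) <= x.1)%R sA.
  case/andP: wA; case: (sA) => //= x s /(order_path_min le_trans) + _.
  by rewrite lexx all_map.
have [isim _] := simulation sigma sA.
have [p [hp cp]] := isim L0 L0 (fun=> false) _ hL0 hL0 wA lo_sA (fun r hr => or_intror (vA r hr)).
exists (plan_sched p); split.
  by have /andP[/path_sorted sB wB] := plan_sched_wf hp; apply/andP.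
split.
- by move=> _ r /(plan_sched_valid hp) [].
- by move=> k r /(plan_sched_deadline hp)/(_ isT) [r' [? _ ?]]; exists r'.
- by rewrite kendallxx addn0 in cp.
Qed.

Theorem mainTheorem7 (T : finType) (R : realFieldType) (L0 : seq T)
  (HL0 : perm_eq L0 (enum T))
  (A : algorithm T R) (HA : forall sigma, wf_sched #|T| (A sigma)) :
  exists B : algorithm T R,
    (forall sigma, wf_sched #|T| (B sigma)) /\
    forall sigma, wf_input sigma ->
      (valid L0 sigma (A sigma) -> valid L0 sigma (B sigma)) /\
      deadline_serving L0 sigma (B sigma) /\
      (cost (B sigma) <= cost (A sigma))%N.
Proof.
pose pick sigma := constructive_indefinite_description _
  (deadline_schedule_exists sigma HL0 (HA sigma)).
exists (fun sigma => proj1_sig (pick sigma)); split=> [sigma|sigma _].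
  by case: (proj2_sig (pick sigma)).
by case: (proj2_sig (pick sigma)) => _ [].
Qed.
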